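(* Let $\{c_n\}_{n\in\mathbb Z}$ be complex numbers such that $c_n+c_{-n}\in M(\theta_0)$ for all $n\ge1$ for some $\theta_0\in[0,\pi/2)$, and such that $\{c_n\}_{n\ge0}\in NBVS$. For $n\ge0$ put $S_n(x)=\sum_{k=-n}^{n}c_ke^{ikx}$. Then the following are equivalent: (i) $S_n(x)$ converges for every $x\in\mathbb R$ to a function $f$ which is continuous and $2\pi$-periodic, and $\lim_{n\to\infty}\|f-S_n\|=0$, where $\|g\|=\max_{x\in\mathbb R}|g(x)|$; (ii) $\lim_{n\to\infty}nc_n=0$ and $\sum_{n=1}^\infty|c_n+c_{-n}|<\infty$.
   Context: For $\theta_0\in[0,\pi/2)$ let $M(\theta_0)=\{z\in\mathbb C: |\arg z|\le\theta_0\}$ (with $0\in M(\theta_0)$). Write $\Delta c_n=c_n-c_{n+1}$. A complex sequence $\mathbf C=\{c_n\}$ belongs to $NBVS$ if there is $\theta_0\in[0,\pi/2)$ with $c_n\in M(\theta_0)$ for all $n\ge1$ and a constant $K(\mathbf C)>0$ (depending only on $\mathbf C$) such that $\sum_{n=m}^{2m}|\Delta c_n|\le K(\mathbf C)\big(|c_m|+|c_{2m}|\big)$ for all $m=1,2,\dots$. *)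

From Stdlib Require Import Reals ZArith.
From Coquelicot Require Import Coquelicot.
Open Scope R_scope.

Definition cexp_i (t : R) : C := (cos t, sin t).

(* M(theta0) = { z : |arg z| <= theta0 } together with 0, written out:
   z = r e^{i phi} with r >= 0 and |phi| <= theta0. *)
Definition inM (theta0 : R) (z : C) : Prop :=
  exists r phi : R, 0 <= r /\ Rabs phi <= theta0 /\ z = Cmult (RtoC r) (cexp_i phi).

Definition Delta (c : nat -> C) (n : nat) : C := Cminus (c n) (c (S n)).

Definition NBVS (c : nat -> C) : Prop :=
  (exists theta0 : R, 0 <= theta0 < PI / 2 /\ forall n : nat, (1 <= n)%nat -> inM theta0 (c n))
  /\ exists K : R, 0 < K /\
     forall m : nat, (1 <= m)%nat ->
       sum_n_m (fun n => Cmod (Delta c n)) m (2 * m) <= K * (Cmod (c m) + Cmod (c (2 * m)%nat)).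

Definition Spart (c : Z -> C) (n : nat) (x : R) : C :=
  sum_n_m (fun j : nat =>
      let k := (Z.of_nat j - Z.of_nat n)%Z in
      Cmult (c k) (cexp_i (IZR k * x)))
    0 (2 * n).

(* Write S_n(x) = c_0 + sum_{k=1}^n (b_k e^{-ikx} + 2i c_k sin(kx)) with b_k = c_k + c_{-k}.
   Both conditions are then equivalent to the partial sums being uniformly Cauchy.

   (ii) => (i): the b-part is dominated by sum |b_k|.  For the sine part, Abel summation
   against the Dirichlet bound |sum_{j=L}^k sin(jx)| <= 1/|sin(x/2)| controls the tail
   beyond L ~ 1/|sin(x/2)|, while the head is bounded termwise by |c_k sin(kx)| <=
   2 k|c_k| |sin(x/2)|; the NBVS condition makes the total variation of c beyond L at most
   3K sup_{k>=L} k|c_k| / L by dyadic blocks.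

   (i) => (ii): at x = 0 the differences of partial sums are sums of b_k, whose real parts
   dominate cos(theta0)|b_k|, so sum |b_k| < oo.  At x = pi/(4m) all sin(kx), m <= k <= 2m,
   exceed 1/sqrt 2 and Re c_k >= cos(theta0)|c_k|, so sum_{k=m}^{2m} |c_k| -> 0; NBVS
   turns this block smallness into n c_n -> 0. *)

From Pilot Require Import Defs.
From Stdlib Require Import Reals ZArith Lia Lra.
From Coquelicot Require Import Coquelicot.
Open Scope R_scope.
Import Defs.

Lemma sum_n_m_le_loc (a b : nat -> R) m n :
  (forall k, (m <= k <= n)%nat -> a k <= b k) ->
  sum_n_m a m n <= sum_n_m b m n.
Proof.
  intros H. apply Rle_trans with (sum_n_m (fun k => Rmax (a k) (b k)) m n).
  - apply sum_n_m_le. intros k. apply Rmax_l.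
  - right. apply sum_n_m_ext_loc. intros k Hk. now apply Rmax_right, H.
Qed.

Lemma sum_n_m_nonneg (a : nat -> R) m n :
  (forall k, (m <= k <= n)%nat -> 0 <= a k) -> 0 <= sum_n_m a m n.
Proof.
  intros H. apply Rle_trans with (sum_n_m (fun _ => 0) m n).
  - rewrite sum_n_m_const, Rmult_0_r. apply Rle_refl.
  - now apply sum_n_m_le_loc.
Qed.

Lemma sum_n_m_le_subrange (a : nat -> R) m' m n n' :
  (forall k, 0 <= a k) -> (m' <= m)%nat -> (n <= n')%nat ->
  sum_n_m a m n <= sum_n_m a m' n'.
Proof.
  intros Ha Hm Hn. destruct (le_lt_dec m n) as [Hmn|Hnm].
  2:{ rewrite sum_n_m_zero by exact Hnm. now apply sum_n_m_nonneg. }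
  assert (Hlow : sum_n_m a m n' <= sum_n_m a m' n').
  { destruct m as [|m]; [replace m' with 0%nat by lia; apply Rle_refl|].
    rewrite (sum_n_m_Chasles a m' m n') by lia.
    assert (0 <= sum_n_m a m' m) by now apply sum_n_m_nonneg.
    change (@plus R_AbelianMonoid) with Rplus. lra. }
  rewrite (sum_n_m_Chasles a m n n') in Hlow by lia.
  assert (0 <= sum_n_m a (S n) n') by now apply sum_n_m_nonneg.
  change (@plus R_AbelianMonoid) with Rplus in Hlow. lra.
Qed.

Lemma sum_n_m_even_le (a : nat -> R) q d :
  (forall k, 0 <= a k) ->
  sum_n_m (fun j => a (2 * j)%nat) q (q + d) <= sum_n_m a (2 * q) (2 * q + 2 * d).
Proof.
  intros Ha. induction d as [|d IH].
  - rewrite !Nat.add_0_r, !sum_n_n. apply Rle_refl.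
  - rewrite Nat.add_succ_r, sum_n_Sm by lia.
    replace (2 * q + 2 * S d)%nat with (S (S (2 * q + 2 * d))) by lia.
    rewrite !sum_n_Sm by lia. change (@plus R_AbelianMonoid) with Rplus.
    replace (2 * S (q + d))%nat with (S (S (2 * q + 2 * d))) by lia.
    pose proof (Ha (S (2 * q + 2 * d))). lra.
Qed.

Lemma sum_n_m_Rplus (f g : nat -> R) m n :
  sum_n_m (fun k => f k + g k) m n = sum_n_m f m n + sum_n_m g m n.
Proof. exact (sum_n_m_plus (G := R_AbelianMonoid) f g m n). Qed.

Lemma sum_n_m_Rmult_r (f : nat -> R) c m n :
  sum_n_m (fun k => f k * c) m n = sum_n_m f m n * c.
Proof. exact (sum_n_m_mult_r (K := R_Ring) c f m n). Qed.

Lemma sum_n_m_Rmult_l (f : nat -> R) c m n :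
  sum_n_m (fun k => c * f k) m n = c * sum_n_m f m n.
Proof. exact (sum_n_m_mult_l (K := R_Ring) c f m n). Qed.

Lemma sum_n_m_Cplus (f g : nat -> C) m n :
  sum_n_m (fun k => Cplus (f k) (g k)) m n = Cplus (sum_n_m f m n) (sum_n_m g m n).
Proof. exact (sum_n_m_plus (G := C_AbelianMonoid) f g m n). Qed.

Lemma sum_n_m_Cmult_l (f : nat -> C) z m n :
  sum_n_m (fun k => Cmult z (f k)) m n = Cmult z (sum_n_m f m n).
Proof. exact (sum_n_m_mult_l (K := C_Ring) z f m n). Qed.

Lemma Cmod_sum_n_m_le (a : nat -> C) m n :
  Cmod (sum_n_m a m n) <= sum_n_m (fun k => Cmod (a k)) m n.
Proof. exact (norm_sum_n_m (K := C_AbsRing) (V := C_NormedModule) a m n). Qed.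

Lemma Re_sum_n_m (a : nat -> C) m n :
  Re (sum_n_m a m n) = sum_n_m (fun k => Re (a k)) m n.
Proof.
  induction n as [|n IH].
  - destruct m; [now rewrite !sum_n_n | now rewrite !sum_n_m_zero by lia].
  - destruct (le_lt_dec m (S n)) as [Hm|Hm].
    + rewrite !sum_n_Sm by exact Hm. rewrite <- IH. apply re_plus.
    + now rewrite !sum_n_m_zero by exact Hm.
Qed.

(** * Trigonometric estimates *)

Lemma Rabs_sin_le t : Rabs (sin t) <= Rabs t.
Proof.
  assert (H : forall u, 0 < u -> Rabs (sin u) <= u).
  { intros u Hu. apply Rabs_le. split.
    - destruct (Rlt_le_dec u PI).
      + assert (0 < sin u) by (apply sin_gt_0; lra). lra.
      + pose proof (SIN_bound u). pose proof PI2_1. lra.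
    - left. now apply sin_lt_x. }
  destruct (Rtotal_order t 0) as [Ht|[->|Ht]].
  - rewrite <- (Ropp_involutive t), sin_neg, Rabs_Ropp, Rabs_Ropp.
    rewrite (Rabs_right (- t)) by lra.
    apply H. lra.
  - rewrite sin_0. lra.
  - rewrite (Rabs_right t) by lra. now apply H.
Qed.

Lemma Rabs_sin_nat_mult_le (k : nat) x : Rabs (sin (INR k * x)) <= INR k * Rabs (sin x).
Proof.
  induction k as [|k IH].
  - rewrite Rmult_0_l, sin_0, Rabs_R0. simpl. lra.
  - rewrite S_INR, Rmult_plus_distr_r, Rmult_1_l, sin_plus.
    eapply Rle_trans; [apply Rabs_triang|]. rewrite !Rabs_mult.
    assert (Rabs (cos x) <= 1) by (apply Rabs_le, COS_bound).
    assert (Rabs (cos (INR k * x)) <= 1) by (apply Rabs_le, COS_bound).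
    pose proof (Rabs_pos (sin x)). pose proof (Rabs_pos (cos (INR k * x))).
    assert (Rabs (sin (INR k * x)) * Rabs (cos x) <= INR k * Rabs (sin x) * 1)
      by (apply Rmult_le_compat; auto using Rabs_pos).
    nra.
Qed.

Lemma Rabs_sin_le_half_angle (k : nat) x :
  Rabs (sin (INR k * x)) <= 2 * INR k * Rabs (sin (x / 2)).
Proof.
  replace (INR k * x) with (INR (2 * k) * (x / 2)) by (rewrite mult_INR; simpl; field).
  replace (2 * INR k) with (INR (2 * k)) by (rewrite mult_INR; reflexivity).
  apply Rabs_sin_nat_mult_le.
Qed.

(* Dirichlet: [2 sin(x/2) sin(jx)] telescopes to a difference of cosines. *)
Lemma sine_sum_dirichlet x L n : (L <= n)%nat ->
  Rabs (sin (x / 2)) * Rabs (sum_n_m (fun j => sin (INR j * x)) L n) <= 1.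
Proof.
  intros HLn.
  assert (Htel : 2 * sin (x / 2) * sum_n_m (fun j => sin (INR j * x)) L n
                 = cos ((INR L - / 2) * x) - cos ((INR n + / 2) * x)).
  { replace n with (L + (n - L))%nat by lia. induction (n - L)%nat as [|d IH].
    - rewrite Nat.add_0_r, sum_n_n.
      replace ((INR L - / 2) * x) with (INR L * x - x / 2) by field.
      replace ((INR L + / 2) * x) with (INR L * x + x / 2) by field.
      rewrite cos_minus, cos_plus. ring.
    - rewrite Nat.add_succ_r, sum_n_Sm by lia. change (@plus R_AbelianMonoid) with Rplus.
      rewrite Rmult_plus_distr_l, IH, S_INR.
      replace ((INR (L + d) + / 2) * x) with ((INR (L + d) + 1) * x - x / 2) by field.
      replace ((INR (L + d) + 1 + / 2) * x) with ((INR (L + d) + 1) * x + x / 2) by field.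
      rewrite cos_minus, cos_plus. ring. }
  assert (H2 : Rabs (2 * sin (x / 2) * sum_n_m (fun j => sin (INR j * x)) L n) <= 2).
  { rewrite Htel. pose proof (COS_bound ((INR L - / 2) * x)).
    pose proof (COS_bound ((INR n + / 2) * x)). apply Rabs_le. lra. }
  rewrite !Rabs_mult, (Rabs_right 2) in H2 by lra. lra.
Qed.

Lemma Cmod_cexp_i t : Cmod (cexp_i t) = 1.
Proof.
  unfold Cmod, cexp_i. cbn [fst snd].
  replace (cos t ^ 2 + sin t ^ 2) with 1 by (rewrite <- (sin2_cos2 t); unfold Rsqr; ring).
  apply sqrt_1.
Qed.

Lemma cexp_i_lipschitz a b : Cmod (Cminus (cexp_i a) (cexp_i b)) <= Rabs (a - b).
Proof.
  set (h := (a - b) / 2).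
  assert (Hsq : Cmod (Cminus (cexp_i a) (cexp_i b)) ^ 2 = 4 * (sin h * sin h)).
  { rewrite Cmod2_alt. unfold cexp_i, Cminus, Cplus, Copp, Re, Im; cbn [fst snd].
    assert (E : 4 * (sin h * sin h) = 2 - 2 * cos (a - b)).
    { replace (a - b) with (2 * h) by (unfold h; field). rewrite cos_2a_sin. ring. }
    rewrite E, cos_minus. pose proof (sin2_cos2 a). pose proof (sin2_cos2 b).
    unfold Rsqr in *. nra. }
  pose proof (Rabs_sin_le h).
  assert (Habs : Rabs (a - b) = 2 * Rabs h) by (unfold h; rewrite Rabs_div, (Rabs_right 2); lra).
  apply Rsqr_incr_0_var; [|apply Rabs_pos]. unfold Rsqr.
  replace (Cmod (Cminus (cexp_i a) (cexp_i b)) * Cmod (Cminus (cexp_i a) (cexp_i b)))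
    with (Cmod (Cminus (cexp_i a) (cexp_i b)) ^ 2) by ring.
  rewrite Hsq, Habs.
  assert (sin h * sin h <= Rabs h * Rabs h).
  { replace (sin h * sin h) with (Rabs (sin h) * Rabs (sin h))
      by (rewrite <- Rabs_mult; apply Rabs_right; nra).
    pose proof (Rabs_pos (sin h)). nra. }
  nra.
Qed.

Lemma cexp_i_period (k : Z) x : cexp_i (IZR k * (x + 2 * PI)) = cexp_i (IZR k * x).
Proof.
  unfold cexp_i. destruct (Z.le_ge_cases 0 k) as [Hk|Hk].
  - replace (IZR k * (x + 2 * PI)) with (IZR k * x + 2 * INR (Z.to_nat k) * PI)
      by (rewrite INR_IZR_INZ, Z2Nat.id by lia; ring).
    now rewrite cos_period, sin_period.
  - replace (IZR k * x) with (IZR k * (x + 2 * PI) + 2 * INR (Z.to_nat (- k)) * PI)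
      by (rewrite INR_IZR_INZ, Z2Nat.id, opp_IZR by lia; ring).
    now rewrite cos_period, sin_period.
Qed.

Lemma inM_Re_ge th z : 0 <= th < PI / 2 -> inM th z -> cos th * Cmod z <= Re z.
Proof.
  intros Hth [r [phi [Hr [Hphi ->]]]].
  rewrite Cmod_mult, Cmod_R, Rabs_right, Cmod_cexp_i by lra.
  assert (cos th <= cos phi).
  { replace (cos phi) with (cos (Rabs phi))
      by (unfold Rabs; destruct (Rcase_abs phi); [apply cos_neg | reflexivity]).
    pose proof (Rabs_pos phi). pose proof PI_RGT_0. apply cos_decr_1; lra. }
  unfold cexp_i, RtoC, Re; simpl. nra.
Qed.

Lemma sin_ge_inv_sqrt2 (m k : nat) : (1 <= m)%nat -> (m <= k <= 2 * m)%nat ->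
  / sqrt 2 <= sin (INR k * (PI / (4 * INR m))).
Proof.
  intros Hm Hk.
  assert (0 < INR m) by (apply lt_0_INR; lia).
  assert (INR m <= INR k) by (apply le_INR; lia).
  assert (INR k <= 2 * INR m) by (rewrite <- (mult_INR 2); apply le_INR; lia).
  assert (Hs2 : 0 < sqrt 2) by (apply sqrt_lt_R0; lra).
  replace (/ sqrt 2) with (1 / sqrt 2) by (field; lra).
  rewrite <- sin_PI4. pose proof PI_RGT_0.
  replace (INR k * (PI / (4 * INR m))) with (INR k / INR m * (PI / 4)) by (field; lra).
  assert (1 <= INR k / INR m <= 2).
  { split; apply Rmult_le_reg_r with (INR m); auto; field_simplify; lra. }
  apply sin_incr_1; nra.
Qed.

(** * Uniform limits *)

Definition unif_cauchy (F : nat -> R -> C) : Prop :=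
  forall eps, 0 < eps -> exists N, forall p n x, (N <= p)%nat -> (N <= n)%nat ->
    Cmod (Cminus (F n x) (F p x)) <= eps.

Lemma Lim_seq_dist_le (u : nat -> R) N eps :
  (forall e, 0 < e -> exists M, forall p n, (M <= p)%nat -> (M <= n)%nat ->
     Rabs (u n - u p) <= e) ->
  (forall p n, (N <= p)%nat -> (N <= n)%nat -> Rabs (u n - u p) <= eps) ->
  forall n, (N <= n)%nat -> Rabs (Lim_seq u - u n) <= eps.
Proof.
  intros Hcauchy Hclose n Hn.
  assert (Hex : ex_finite_lim_seq u).
  { apply ex_lim_seq_cauchy_corr. intros [e He].
    destruct (Hcauchy (e / 2)) as [M HM]; [lra|].
    exists M. intros p q Hp Hq. rewrite Rabs_minus_sym. specialize (HM p q Hp Hq). simpl. lra. }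
  destruct Hex as [l Hl]. rewrite (is_lim_seq_unique _ _ Hl). simpl.
  assert (Hlo : Rbar_le (u n - eps) l).
  { apply (is_lim_seq_le_loc (fun _ => u n - eps) u); [|apply is_lim_seq_const|exact Hl].
    exists n. intros k Hk. pose proof (Hclose n k Hn ltac:(lia)) as H.
    apply Rabs_le_between in H. lra. }
  assert (Hhi : Rbar_le l (u n + eps)).
  { apply (is_lim_seq_le_loc u (fun _ => u n + eps)); [|exact Hl|apply is_lim_seq_const].
    exists n. intros k Hk. pose proof (Hclose n k Hn ltac:(lia)) as H.
    apply Rabs_le_between in H. lra. }
  simpl in Hlo, Hhi. apply Rabs_le. lra.
Qed.

Lemma Im_le_Cmod (z : C) : Rabs (Im z) <= Cmod z.
Proof.
  pose proof (Rmax_Cmod z). pose proof (Rmax_r (Rabs (fst z)) (Rabs (snd z))). unfold Im. lra.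
Qed.

Lemma Cmod_le_Re_Im (z : C) : Cmod z <= Rabs (Re z) + Rabs (Im z).
Proof.
  apply Rsqr_incr_0_var; [|pose proof (Rabs_pos (Re z)); pose proof (Rabs_pos (Im z)); lra].
  unfold Rsqr. replace (Cmod z * Cmod z) with (Cmod z ^ 2) by ring.
  rewrite Cmod2_alt, <- (pow2_abs (Re z)), <- (pow2_abs (Im z)).
  pose proof (Rabs_pos (Re z)). pose proof (Rabs_pos (Im z)). nra.
Qed.

Definition Clim (u : nat -> C) : C :=
  (real (Lim_seq (fun n => Re (u n))), real (Lim_seq (fun n => Im (u n)))).

Lemma unif_cauchy_Clim_dist_le (F : nat -> R -> C) :
  unif_cauchy F ->
  forall eps, 0 < eps -> exists N, forall n x, (N <= n)%nat ->
    Cmod (Cminus (Clim (fun k => F k x)) (F n x)) <= eps.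
Proof.
  intros HF eps Heps. destruct (HF (eps / 2)) as [N HN]; [lra|].
  exists N. intros n x Hn.
  assert (Hcomp : forall (g : C -> R), (forall z, Rabs (g z) <= Cmod z) ->
            (forall z w, g (Cminus z w) = g z - g w) ->
            Rabs (real (Lim_seq (fun k => g (F k x))) - g (F n x)) <= eps / 2).
  { intros g Hg Hsub.
    assert (Hdiff : forall p q, Rabs (g (F q x) - g (F p x)) <= Cmod (Cminus (F q x) (F p x)))
      by (intros; rewrite <- Hsub; apply Hg).
    apply (Lim_seq_dist_le (fun k => g (F k x)) N); [| |exact Hn].
    - intros e He. destruct (HF e He) as [M HM]. exists M. intros p q Hp Hq.
      eapply Rle_trans; [apply Hdiff|]. now apply HM.
    - intros p q Hp Hq. eapply Rle_trans; [apply Hdiff|]. now apply HN. }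
  eapply Rle_trans; [apply Cmod_le_Re_Im|].
  assert (ERe : Re (Cminus (Clim (fun k => F k x)) (F n x))
          = real (Lim_seq (fun k => Re (F k x))) - Re (F n x)) by reflexivity.
  assert (EIm : Im (Cminus (Clim (fun k => F k x)) (F n x))
          = real (Lim_seq (fun k => Im (F k x))) - Im (F n x)) by reflexivity.
  rewrite ERe, EIm.
  pose proof (Hcomp Re re_le_Cmod (fun z w => eq_refl)).
  pose proof (Hcomp Im Im_le_Cmod (fun z w => eq_refl)).
  lra.
Qed.

Lemma continuous_unif_limit_lipschitz (f : R -> C) (F : nat -> R -> C) :
  (forall eps, 0 < eps -> exists n, forall x, Cmod (Cminus (f x) (F n x)) <= eps) ->
  (forall n, exists L, 0 <= L /\
     forall x y, Cmod (Cminus (F n y) (F n x)) <= L * Rabs (y - x)) ->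
  forall x, continuous f x.
Proof.
  intros Hunif Hlip x. apply filterlim_locally. intros [eps Heps].
  destruct (Hunif (eps / 4)) as [n Hn]; [lra|].
  destruct (Hlip n) as [L [HL HFL]].
  assert (Hdelta : 0 < eps / (4 * (L + 1))) by (apply Rdiv_lt_0_compat; lra).
  exists (mkposreal _ Hdelta). intros y Hy.
  change (Rabs (y - x) < eps / (4 * (L + 1))) in Hy.
  apply (norm_compat1 (K := C_AbsRing) (V := C_NormedModule)).
  change (Cmod (Cminus (f y) (f x)) < eps).
  replace (Cminus (f y) (f x)) with
    (Cplus (Cplus (Cminus (f y) (F n y)) (Cminus (F n y) (F n x))) (Copp (Cminus (f x) (F n x))))
    by ring.
  eapply Rle_lt_trans; [apply Cmod_triangle|]. rewrite Cmod_opp.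
  eapply Rle_lt_trans; [apply Rplus_le_compat_r, Cmod_triangle|].
  pose proof (Hn x). pose proof (Hn y). pose proof (HFL x y).
  assert (L * Rabs (y - x) < eps / 4).
  { apply Rle_lt_trans with ((L + 1) * Rabs (y - x)); [pose proof (Rabs_pos (y - x)); nra|].
    apply Rmult_lt_reg_l with (/ (L + 1)); [apply Rinv_0_lt_compat; lra|].
    replace (/ (L + 1) * (eps / 4)) with (eps / (4 * (L + 1))) by (field; lra).
    rewrite <- Rmult_assoc, Rinv_l, Rmult_1_l by lra. exact Hy. }
  lra.
Qed.

Lemma unif_cauchy_limit (F : nat -> R -> C) :
  unif_cauchy F ->
  (forall n x, F n (x + 2 * PI) = F n x) ->
  (forall n, exists L, 0 <= L /\
     forall x y, Cmod (Cminus (F n y) (F n x)) <= L * Rabs (y - x)) ->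
  exists f : R -> C,
      (forall x : R, continuous f x)
      /\ (forall x : R, f (x + 2 * PI) = f x)
      /\ (forall x : R, filterlim (fun n : nat => F n x) eventually (locally (f x)))
      /\ (forall eps : R, 0 < eps -> exists N : nat, forall n : nat, (N <= n)%nat ->
            forall x : R, Cmod (Cminus (f x) (F n x)) <= eps).
Proof.
  intros HF Hper Hlip.
  pose proof (unif_cauchy_Clim_dist_le F HF) as Hunif.
  exists (fun x => Clim (fun k => F k x)). split; [|split; [|split]].
  - apply (continuous_unif_limit_lipschitz _ F); [|exact Hlip].
    intros eps Heps. destruct (Hunif eps Heps) as [N HN]. exists N. intros x. now apply HN.
  - intros x. unfold Clim.
    rewrite (Lim_seq_ext (fun k => Re (F k (x + 2 * PI))) (fun k => Re (F k x)))
      by (intros; now rewrite Hper).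
    rewrite (Lim_seq_ext (fun k => Im (F k (x + 2 * PI))) (fun k => Im (F k x)))
      by (intros; now rewrite Hper).
    reflexivity.
  - intros x. apply filterlim_locally. intros [eps Heps].
    destruct (Hunif (eps / 2)) as [N HN]; [lra|].
    exists N. intros n Hn.
    apply (norm_compat1 (K := C_AbsRing) (V := C_NormedModule)).
    change (Cmod (Cminus (F n x) (Clim (fun k => F k x))) < eps).
    rewrite <- Cmod_opp. replace (Copp (Cminus (F n x) (Clim (fun k => F k x))))
      with (Cminus (Clim (fun k => F k x)) (F n x)) by ring.
    pose proof (HN n x Hn). simpl. lra.
  - intros eps Heps. destruct (Hunif eps Heps) as [N HN]. exists N. intros n Hn x. now apply HN.
Qed.

(** * The sine-series estimate *)

Lemma RtoC_sum_n_m (f : nat -> R) m n :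
  sum_n_m (fun k => RtoC (f k)) m n = RtoC (sum_n_m f m n).
Proof.
  induction n as [|n IH].
  - destruct m; [now rewrite !sum_n_n | now rewrite !sum_n_m_zero by lia].
  - destruct (le_lt_dec m (S n)) as [Hm|Hm].
    + rewrite !sum_n_Sm by exact Hm. rewrite IH. symmetry. apply RtoC_plus.
    + now rewrite !sum_n_m_zero by exact Hm.
Qed.

Lemma abel_summation (a s : nat -> C) L d : (1 <= L)%nat ->
  sum_n_m (fun k => Cmult (a k) (s k)) L (L + d) =
  Cplus (Cmult (a (L + d)%nat) (sum_n_m s L (L + d)))
        (sum_n_m (fun k => Cmult (Cminus (a k) (a (S k))) (sum_n_m s L k)) L (L + d - 1)).
Proof.
  intros HL. change (@eq C (sum_n_m (fun k => Cmult (a k) (s k)) L (L + d))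
    (Cplus (Cmult (a (L + d)%nat) (sum_n_m s L (L + d)))
      (sum_n_m (fun k => Cmult (Cminus (a k) (a (S k))) (sum_n_m s L k)) L (L + d - 1)))).
  induction d as [|d IH].
  - rewrite Nat.add_0_r, !sum_n_n, sum_n_m_zero by lia.
    change (@zero C_AbelianMonoid) with (RtoC 0). ring.
  - replace (L + S d)%nat with (S (L + d)) by lia.
    replace (S (L + d) - 1)%nat with (L + d)%nat by lia.
    rewrite !sum_n_Sm, IH by lia. change (@plus C_AbelianMonoid) with Cplus.
    destruct d as [|d].
    + rewrite Nat.add_0_r, !sum_n_n, sum_n_m_zero by lia.
      change (@zero C_AbelianMonoid) with (RtoC 0). ring.
    + replace (L + S d - 1)%nat with (L + d)%nat by lia.
      replace (L + S d)%nat with (S (L + d)) by lia.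
      rewrite (sum_n_Sm (fun k => Cmult (Cminus (a k) (a (S k))) (sum_n_m s L k)) L (L + d))
        by lia.
      rewrite (sum_n_Sm s L (L + d)) by lia.
      change (@plus C_AbelianMonoid) with Cplus. ring.
Qed.

Section SineSeries.

Variables (a : nat -> C) (K eps : R) (m : nat).
Hypothesis Hm : (1 <= m)%nat.
Hypothesis HK : 0 <= K.
Hypothesis Heps : 0 <= eps.
Hypothesis Hdecay : forall k, (m <= k)%nat -> INR k * Cmod (a k) <= eps.
Hypothesis Hblock : forall j, (1 <= j)%nat ->
  sum_n_m (fun k => Cmod (Delta a k)) j (2 * j) <= K * (Cmod (a j) + Cmod (a (2 * j))).

Let Cmod_a_le k : (m <= k)%nat -> Cmod (a k) <= eps / INR k.
Proof.
  intros Hk. assert (0 < INR k) by (apply lt_0_INR; lia).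
  apply Rmult_le_reg_l with (INR k); [lra|].
  replace (INR k * (eps / INR k)) with eps by (field; lra). now apply Hdecay.
Qed.

Lemma variation_dyadic_le J L : (m <= L)%nat ->
  sum_n_m (fun k => Cmod (Delta a k)) L (2 ^ J * L - 1) <= 3 * K * eps / INR L.
Proof.
  revert L. induction J as [|J IH]; intros L HL;
    assert (HL0 : 0 < INR L) by (apply lt_0_INR; lia).
  - rewrite sum_n_m_zero by (simpl; lia). change (@zero R_AbelianMonoid) with 0.
    apply Rdiv_le_0_compat; nra.
  - assert (1 <= 2 ^ J)%nat by (apply Nat.pow_le_mono_r with (a := 2%nat) (b := 0%nat); lia).
    replace (2 ^ S J * L - 1)%nat with (2 ^ J * (2 * L) - 1)%nat by (simpl; lia).
    rewrite (sum_n_m_Chasles _ L (2 * L - 1)) by nia.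
    change (@plus R_AbelianMonoid) with Rplus.
    replace (S (2 * L - 1)) with (2 * L)%nat by lia.
    assert (Hfirst : sum_n_m (fun k => Cmod (Delta a k)) L (2 * L - 1)
                     <= K * (eps / INR L + eps / (2 * INR L))).
    { eapply Rle_trans.
      { apply (sum_n_m_le_subrange _ L L (2 * L - 1) (2 * L));
          [intros; apply Cmod_ge_0|lia|lia]. }
      eapply Rle_trans; [apply Hblock; lia|]. apply Rmult_le_compat_l; [exact HK|].
      rewrite <- (mult_INR 2). apply Rplus_le_compat; apply Cmod_a_le; lia. }
    pose proof (IH (2 * L)%nat ltac:(lia)) as Hrest. rewrite mult_INR in Hrest.
    change (INR 2) with 2 in Hrest.
    replace (3 * K * eps / INR L)
      with (K * (eps / INR L + eps / (2 * INR L)) + 3 * K * eps / (2 * INR L)) by (field; lra).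
    lra.
Qed.

Lemma variation_tail_le L q : (m <= L)%nat ->
  sum_n_m (fun k => Cmod (Delta a k)) L q <= 3 * K * eps / INR L.
Proof.
  intros HL. eapply Rle_trans; [|apply (variation_dyadic_le q L HL)].
  apply sum_n_m_le_subrange; [intros; apply Cmod_ge_0|lia|].
  assert (q < 2 ^ q)%nat by (apply Nat.pow_gt_lin_r; lia). nia.
Qed.

Lemma sine_sum_head_le x p :
  Cmod (sum_n_m (fun k => Cmult (a k) (sin (INR k * x))) m p)
  <= 2 * eps * Rabs (sin (x / 2)) * INR (S p - m).
Proof.
  eapply Rle_trans; [apply Cmod_sum_n_m_le|].
  rewrite Rmult_comm, <- sum_n_m_const. apply sum_n_m_le_loc. intros k Hk.
  rewrite Cmod_mult, Cmod_R.
  pose proof (Rabs_sin_le_half_angle k x). pose proof (Hdecay k ltac:(lia)).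
  pose proof (Cmod_ge_0 (a k)). pose proof (Rabs_pos (sin (x / 2))).
  apply Rle_trans with (Cmod (a k) * (2 * INR k * Rabs (sin (x / 2)))).
  - now apply Rmult_le_compat_l.
  - nra.
Qed.

(* Abel summation against the Dirichlet bound [|sum_L^k sin(jx)| <= L],
   valid once [L |sin(x/2)| >= 1]. *)
Lemma sine_sum_tail_le x L n : (m <= L <= n)%nat -> 1 <= INR L * Rabs (sin (x / 2)) ->
  Cmod (sum_n_m (fun k => Cmult (a k) (sin (INR k * x))) L n) <= (1 + 3 * K) * eps.
Proof.
  intros HLn Hs.
  assert (HL0 : 0 < INR L) by (apply lt_0_INR; lia).
  assert (Hsig : forall k, (L <= k)%nat ->
            Cmod (sum_n_m (fun j => RtoC (sin (INR j * x))) L k) <= INR L).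
  { intros k Hk. rewrite RtoC_sum_n_m, Cmod_R.
    pose proof (sine_sum_dirichlet x L k Hk).
    pose proof (Rabs_pos (sum_n_m (fun j => sin (INR j * x)) L k)). nra. }
  replace n with (L + (n - L))%nat by lia.
  rewrite (abel_summation a (fun k => RtoC (sin (INR k * x))) L (n - L)) by lia.
  replace (L + (n - L))%nat with n by lia.
  eapply Rle_trans; [apply Cmod_triangle|]. rewrite Cmod_mult.
  replace ((1 + 3 * K) * eps) with (eps + 3 * K * eps) by ring.
  apply Rplus_le_compat.
  - apply Rle_trans with (eps / INR n * INR L).
    + apply Rmult_le_compat; [apply Cmod_ge_0|apply Cmod_ge_0|apply Cmod_a_le; lia|].
      apply Hsig; lia.
    + assert (INR L <= INR n) by (apply le_INR; lia).
      apply Rmult_le_reg_r with (INR n); [lra|]. field_simplify; nra.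
  - eapply Rle_trans; [apply Cmod_sum_n_m_le|].
    apply Rle_trans with (sum_n_m (fun k => Cmod (Delta a k) * INR L) L (n - 1)).
    + apply sum_n_m_le_loc. intros k Hk.
      rewrite Cmod_mult. apply Rmult_le_compat_l; [apply Cmod_ge_0|apply Hsig; lia].
    + rewrite sum_n_m_Rmult_r.
      pose proof (variation_tail_le L (n - 1) ltac:(lia)).
      apply Rle_trans with (3 * K * eps / INR L * INR L); [apply Rmult_le_compat_r; lra|].
      right. field. lra.
Qed.

Lemma sine_sum_le x n :
  Cmod (sum_n_m (fun k => Cmult (a k) (sin (INR k * x))) m n) <= (3 + 3 * K) * eps.
Proof.
  set (s := Rabs (sin (x / 2))).
  destruct (Req_dec s 0) as [Hs0|Hs0].
  { eapply Rle_trans; [apply sine_sum_head_le|]. fold s. rewrite Hs0. nra. }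
  assert (Hs : 0 < s) by (pose proof (Rabs_pos (sin (x / 2))); fold s in H; lra).
  destruct (nfloor_ex (/ s)) as [q Hq]; [apply Rlt_le, Rinv_0_lt_compat, Hs|].
  assert (Hqs : INR q * s <= 1).
  { apply Rmult_le_reg_r with (/ s); [now apply Rinv_0_lt_compat|].
    rewrite Rmult_assoc, Rinv_r, Rmult_1_l, Rmult_1_r by lra. lra. }
  assert (Hhead : forall p, (p < Nat.max m (S q))%nat ->
    Cmod (sum_n_m (fun k => Cmult (a k) (sin (INR k * x))) m p) <= 2 * eps).
  { intros p Hp. eapply Rle_trans; [apply sine_sum_head_le|]. fold s.
    assert (INR (S p - m) <= INR q) by (apply le_INR; lia).
    assert (INR (S p - m) * s <= 1) by nra.
    replace (2 * eps * s * INR (S p - m)) with (2 * eps * (INR (S p - m) * s)) by ring.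
    nra. }
  destruct (le_lt_dec (Nat.max m (S q)) n) as [Hn|Hn].
  2:{ eapply Rle_trans; [now apply Hhead|]. nra. }
  set (L := Nat.max m (S q)) in *.
  rewrite (sum_n_m_Chasles _ m (L - 1) n) by lia. replace (S (L - 1)) with L by lia.
  eapply Rle_trans; [apply Cmod_triangle|].
  pose proof (Hhead (L - 1)%nat ltac:(lia)).
  assert (1 <= INR L * s).
  { assert (INR (S q) <= INR L) by (apply le_INR; lia). rewrite S_INR in H0.
    apply Rle_trans with ((INR q + 1) * s); [|nra].
    apply Rmult_le_reg_r with (/ s); [now apply Rinv_0_lt_compat|].
    rewrite Rmult_assoc, Rinv_r, Rmult_1_l, Rmult_1_r by lra. lra. }
  pose proof (sine_sum_tail_le x L n ltac:(lia) H0). lra.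
Qed.

End SineSeries.

(** * Decay of NBVS sequences *)

Lemma Cmod_S_le_Delta (a : nat -> C) k : Cmod (a (S k)) <= Cmod (a k) + Cmod (Delta a k).
Proof.
  replace (a (S k)) with (Cplus (a k) (Copp (Delta a k))) by (unfold Delta; ring).
  rewrite <- (Cmod_opp (Delta a k)). apply Cmod_triangle.
Qed.

Lemma Cmod_le_Cmod_add_block_variation (a : nat -> C) j n : (j <= n <= S (2 * j))%nat ->
  Cmod (a n) <= Cmod (a j) + sum_n_m (fun k => Cmod (Delta a k)) j (2 * j).
Proof.
  intros Hn.
  assert (Hvar : forall k, 0 <= Cmod (Delta a k)) by (intros; apply Cmod_ge_0).
  assert (Htel : forall d, Cmod (a (S (j + d))) <=
                   Cmod (a j) + sum_n_m (fun k => Cmod (Delta a k)) j (j + d)).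
  { induction d as [|d IH].
    - rewrite Nat.add_0_r, sum_n_n. apply Cmod_S_le_Delta.
    - rewrite Nat.add_succ_r, sum_n_Sm by lia. change (@plus R_AbelianMonoid) with Rplus.
      pose proof (Cmod_S_le_Delta a (S (j + d))). lra. }
  destruct (Nat.eq_dec n j) as [->|Hnj].
  - pose proof (sum_n_m_nonneg (fun k => Cmod (Delta a k)) j (2 * j) (fun k _ => Hvar k)). lra.
  - replace n with (S (j + (n - S j))) by lia.
    eapply Rle_trans; [apply Htel|]. apply Rplus_le_compat_l.
    apply sum_n_m_le_subrange; [exact Hvar|lia|lia].
Qed.

Section BlockDecay.

Variables (a : nat -> C) (K : R).
Hypothesis HK : 0 <= K.
Hypothesis Hblock : forall j, (1 <= j)%nat ->
  sum_n_m (fun k => Cmod (Delta a k)) j (2 * j) <= K * (Cmod (a j) + Cmod (a (2 * j))).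

(* Average the bound [|a_n| <= (K+1)(|a_j| + |a_2j|)] over [p < j <= 2p]. *)
Lemma Cmod_le_block_sums p n : (1 <= p)%nat -> (n = 2 * p \/ n = S (2 * p))%nat ->
  INR p * Cmod (a n) <=
  (K + 1) * (sum_n_m (fun k => Cmod (a k)) p (2 * p)
             + sum_n_m (fun k => Cmod (a k)) (2 * p) (4 * p)).
Proof.
  intros Hp Hn.
  assert (Ha : forall k, 0 <= Cmod (a k)) by (intros; apply Cmod_ge_0).
  assert (Hj : forall j, (p + 1 <= j <= 2 * p)%nat ->
            Cmod (a n) <= (K + 1) * (Cmod (a j) + Cmod (a (2 * j)%nat))).
  { intros j Hj. pose proof (Cmod_le_Cmod_add_block_variation a j n ltac:(lia)).
    pose proof (Hblock j ltac:(lia)). pose proof (Ha j). pose proof (Ha (2 * j)%nat). nra. }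
  apply Rle_trans with ((K + 1) * (sum_n_m (fun k => Cmod (a k)) (p + 1) (2 * p)
                          + sum_n_m (fun j => Cmod (a (2 * j)%nat)) (p + 1) (2 * p))).
  - rewrite <- sum_n_m_Rplus, <- sum_n_m_Rmult_l.
    replace (INR p * Cmod (a n)) with (sum_n_m (fun _ => Cmod (a n)) (p + 1) (2 * p))
      by (rewrite sum_n_m_const; f_equal; f_equal; lia).
    now apply sum_n_m_le_loc.
  - apply Rmult_le_compat_l; [lra|]. apply Rplus_le_compat.
    + apply sum_n_m_le_subrange; [exact Ha|lia|lia].
    + pose proof (sum_n_m_even_le (fun k => Cmod (a k)) (p + 1) (p - 1) Ha) as He.
      replace (p + 1 + (p - 1))%nat with (2 * p)%nat in He by lia.
      eapply Rle_trans; [exact He|]. apply sum_n_m_le_subrange; [exact Ha|lia|lia].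
Qed.

Lemma block_decay :
  (forall eta, 0 < eta -> exists M, forall m, (M <= m)%nat -> (1 <= m)%nat ->
     sum_n_m (fun k => Cmod (a k)) m (2 * m) <= eta) ->
  is_lim_seq (fun n => INR n * Cmod (a n)) 0.
Proof.
  intros Hsmall. apply is_lim_seq_spec. intros [eps Heps]. simpl.
  set (eta := eps / (12 * (K + 1))).
  assert (Heta : 0 < eta) by (apply Rdiv_lt_0_compat; lra).
  destruct (Hsmall eta Heta) as [M HM].
  exists (2 * M + 2)%nat. intros n Hn.
  assert (Hp : exists p, (n = 2 * p \/ n = S (2 * p))%nat).
  { destruct (Nat.Even_or_Odd n) as [[p Hp]|[p Hp]]; exists p; lia. }
  destruct Hp as [p Hp].
  pose proof (Cmod_le_block_sums p n ltac:(lia) Hp) as Hav.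
  pose proof (HM p ltac:(lia) ltac:(lia)).
  pose proof (HM (2 * p)%nat ltac:(lia) ltac:(lia)) as H2.
  replace (2 * (2 * p))%nat with (4 * p)%nat in H2 by lia.
  assert (INR n <= 3 * INR p)
    by (replace 3 with (INR 3) by (simpl; ring); rewrite <- mult_INR; apply le_INR; lia).
  pose proof (Cmod_ge_0 (a n)).
  assert (INR p * Cmod (a n) <= eps / 6).
  { eapply Rle_trans; [exact Hav|].
    replace (eps / 6) with ((K + 1) * (eta + eta)) by (unfold eta; field; lra).
    apply Rmult_le_compat_l; lra. }
  rewrite Rminus_0_r, Rabs_right by (apply Rle_ge, Rmult_le_pos; [apply pos_INR|lra]).
  nra.
Qed.

End BlockDecay.

(** * Partial sums of the series *)

Lemma unif_cauchy_ordered (F : nat -> R -> C) :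
  (forall eps, 0 < eps -> exists N, forall p n x, (N <= p <= n)%nat ->
     Cmod (Cminus (F n x) (F p x)) <= eps) ->
  unif_cauchy F.
Proof.
  intros H eps Heps. destruct (H eps Heps) as [N HN]. exists N. intros p n x Hp Hn.
  destruct (le_lt_dec p n) as [Hpn|Hnp]; [apply HN; lia|].
  rewrite <- Cmod_opp. replace (Copp (Cminus (F n x) (F p x))) with (Cminus (F p x) (F n x))
    by ring. apply HN; lia.
Qed.

Lemma unif_limit_unif_cauchy (f : R -> C) (F : nat -> R -> C) :
  (forall eps, 0 < eps -> exists N, forall n, (N <= n)%nat ->
     forall x, Cmod (Cminus (f x) (F n x)) <= eps) ->
  unif_cauchy F.
Proof.
  intros H eps Heps. destruct (H (eps / 2)) as [N HN]; [lra|]. exists N. intros p n x Hp Hn.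
  replace (Cminus (F n x) (F p x)) with (Cplus (Cminus (f x) (F p x)) (Copp (Cminus (f x) (F n x))))
    by ring.
  eapply Rle_trans; [apply Cmod_triangle|]. rewrite Cmod_opp.
  pose proof (HN p Hp x). pose proof (HN n Hn x). lra.
Qed.

Lemma ex_series_tail_le (u : nat -> R) : ex_series (fun n => u (S n)) ->
  forall d, 0 < d -> exists N, forall p n, (N <= p)%nat -> (p < n)%nat ->
    sum_n_m u (S p) n <= d.
Proof.
  intros Hs d Hd.
  apply (Cauchy_ex_series (K := R_AbsRing) (V := R_CompleteNormedModule)) in Hs.
  destruct (Hs (mkposreal d Hd)) as [N HN]. exists N. intros p n Hp Hn.
  specialize (HN p (n - 1)%nat Hp ltac:(lia)).
  change (Rabs (sum_n_m (fun j => u (S j)) p (n - 1)) < d) in HN.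
  rewrite (sum_n_m_S (G := R_AbelianMonoid) u) in HN. replace (S (n - 1)) with n in HN by lia.
  pose proof (Rle_abs (sum_n_m u (S p) n)). lra.
Qed.

Section PartialSums.

Variable c : Z -> C.

Definition csym (k : nat) : C := Cplus (c (Z.of_nat k)) (c (- Z.of_nat k)%Z).

Definition Sterm (k : nat) (x : R) : C :=
  Cplus (Cmult (c (Z.of_nat k)) (cexp_i (INR k * x)))
        (Cmult (c (- Z.of_nat k)%Z) (cexp_i (- INR k * x))).

Lemma Spart_0 x : Spart c 0 x = c 0%Z.
Proof.
  unfold Spart. rewrite sum_n_n. simpl. rewrite Rmult_0_l.
  unfold cexp_i. rewrite cos_0, sin_0. change (1, 0) with (RtoC 1). ring.
Qed.

Lemma Spart_S n x : Spart c (S n) x = Cplus (Spart c n x) (Sterm (S n) x).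
Proof.
  unfold Spart.
  set (g := fun n j => let k := (Z.of_nat j - Z.of_nat n)%Z in Cmult (c k) (cexp_i (IZR k * x))).
  change (@eq C (sum_n_m (g (S n)) 0 (2 * S n)) (Cplus (sum_n_m (g n) 0 (2 * n)) (Sterm (S n) x))).
  replace (2 * S n)%nat with (S (S (2 * n))) by lia.
  rewrite sum_Sn_m, sum_n_Sm, <- sum_n_m_S by lia.
  rewrite (sum_n_m_ext (fun j => g (S n) (S j)) (g n)).
  2:{ intros j. unfold g. cbv zeta.
      now replace (Z.of_nat (S j) - Z.of_nat (S n))%Z with (Z.of_nat j - Z.of_nat n)%Z by lia. }
  unfold g, Sterm. change (@plus C_AbelianMonoid) with Cplus.
  replace (Z.of_nat 0 - Z.of_nat (S n))%Z with (- Z.of_nat (S n))%Z by lia.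
  replace (Z.of_nat (S (S (2 * n))) - Z.of_nat (S n))%Z with (Z.of_nat (S n)) by lia.
  rewrite opp_IZR, <- INR_IZR_INZ. ring.
Qed.

Lemma Spart_sub p n x : (p <= n)%nat ->
  Cminus (Spart c n x) (Spart c p x) = sum_n_m (fun k => Sterm k x) (S p) n.
Proof.
  intros Hpn. induction n as [|n IH].
  - replace p with 0%nat by lia. rewrite sum_n_m_zero by lia.
    change (@zero C_AbelianMonoid) with (RtoC 0). ring.
  - destruct (Nat.eq_dec p (S n)) as [->|Hp].
    + rewrite sum_n_m_zero by lia. change (@zero C_AbelianMonoid) with (RtoC 0). ring.
    + rewrite Spart_S, sum_n_Sm, <- IH by lia. change (@plus C_AbelianMonoid) with Cplus. ring.
Qed.

Lemma Spart_period n x : Spart c n (x + 2 * PI) = Spart c n x.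
Proof.
  unfold Spart. apply sum_n_m_ext. intros j. cbv zeta. now rewrite cexp_i_period.
Qed.

Lemma Spart_lipschitz n : exists L, 0 <= L /\
  forall x y, Cmod (Cminus (Spart c n y) (Spart c n x)) <= L * Rabs (y - x).
Proof.
  induction n as [|n [L [HL HLip]]].
  - exists 0. split; [lra|]. intros x y. rewrite !Spart_0.
    replace (Cminus (c 0%Z) (c 0%Z)) with (RtoC 0) by ring. rewrite Cmod_0. lra.
  - set (A := Cmod (c (Z.of_nat (S n))) + Cmod (c (- Z.of_nat (S n))%Z)).
    assert (HA : 0 <= A)
      by (unfold A; pose proof (Cmod_ge_0 (c (Z.of_nat (S n))));
          pose proof (Cmod_ge_0 (c (- Z.of_nat (S n))%Z)); lra).
    exists (L + A * INR (S n)). split; [pose proof (pos_INR (S n)); nra|]. intros x y.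
    assert (Hterm : Cmod (Cminus (Sterm (S n) y) (Sterm (S n) x))
                    <= A * INR (S n) * Rabs (y - x)).
    { unfold Sterm.
      replace (Cminus _ _) with
        (Cplus (Cmult (c (Z.of_nat (S n)))
                  (Cminus (cexp_i (INR (S n) * y)) (cexp_i (INR (S n) * x))))
               (Cmult (c (- Z.of_nat (S n))%Z)
                  (Cminus (cexp_i (- INR (S n) * y)) (cexp_i (- INR (S n) * x)))))
        by ring.
      eapply Rle_trans; [apply Cmod_triangle|]. rewrite !Cmod_mult.
      pose proof (cexp_i_lipschitz (INR (S n) * y) (INR (S n) * x)) as H1.
      pose proof (cexp_i_lipschitz (- INR (S n) * y) (- INR (S n) * x)) as H2.
      replace (INR (S n) * y - INR (S n) * x) with (INR (S n) * (y - x)) in H1 by ring.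
      replace (- INR (S n) * y - - INR (S n) * x) with (- INR (S n) * (y - x)) in H2 by ring.
      rewrite Rabs_mult, Rabs_right in H1 by (apply Rle_ge, pos_INR).
      rewrite Rabs_mult, Rabs_Ropp, Rabs_right in H2 by (apply Rle_ge, pos_INR).
      unfold A. rewrite !Rmult_plus_distr_r.
      rewrite !(Rmult_assoc (Cmod _)).
      apply Rplus_le_compat; apply Rmult_le_compat_l; auto using Cmod_ge_0. }
    rewrite !Spart_S.
    replace (Cminus (Cplus (Spart c n y) (Sterm (S n) y)) (Cplus (Spart c n x) (Sterm (S n) x)))
      with (Cplus (Cminus (Spart c n y) (Spart c n x)) (Cminus (Sterm (S n) y) (Sterm (S n) x)))
      by ring.
    eapply Rle_trans; [apply Cmod_triangle|]. pose proof (HLip x y). nra.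
Qed.

Lemma Sterm_decomp k x : Sterm k x =
  Cplus (Cmult (csym k) (cexp_i (- INR k * x)))
        (Cmult (Cmult 2 Ci) (Cmult (c (Z.of_nat k)) (sin (INR k * x)))).
Proof.
  unfold Sterm, csym, cexp_i, Ci.
  replace (- INR k * x) with (- (INR k * x)) by ring. rewrite cos_neg, sin_neg.
  destruct (c (Z.of_nat k)), (c (- Z.of_nat k)%Z).
  unfold Cplus, Cmult, RtoC; simpl. f_equal; ring.
Qed.

Lemma Sterm_0 k : Sterm k 0 = csym k.
Proof.
  rewrite Sterm_decomp, !Rmult_0_r, sin_0. unfold cexp_i. rewrite cos_0, sin_0.
  change (1, 0) with (RtoC 1). ring.
Qed.

Lemma sum_Sterm m n x : sum_n_m (fun k => Sterm k x) m n =
  Cplus (sum_n_m (fun k => Cmult (csym k) (cexp_i (- INR k * x))) m n)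
        (Cmult (Cmult 2 Ci) (sum_n_m (fun k => Cmult (c (Z.of_nat k)) (sin (INR k * x))) m n)).
Proof.
  rewrite (sum_n_m_ext _ _ m n (fun k => Sterm_decomp k x)).
  now rewrite sum_n_m_Cplus, sum_n_m_Cmult_l.
Qed.

Lemma Cmod_sum_csym_exp_le m n x :
  Cmod (sum_n_m (fun k => Cmult (csym k) (cexp_i (- INR k * x))) m n)
  <= sum_n_m (fun k => Cmod (csym k)) m n.
Proof.
  eapply Rle_trans; [apply Cmod_sum_n_m_le|]. right. apply sum_n_m_ext. intros k.
  now rewrite Cmod_mult, Cmod_cexp_i, Rmult_1_r.
Qed.

Lemma Cmod_2Ci (z : C) : Cmod (Cmult (Cmult 2 Ci) z) = 2 * Cmod z.
Proof. rewrite !Cmod_mult, Cmod_Ci, Cmod_R, Rabs_right by lra. ring. Qed.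

Lemma Cmod_sum_Sterm_le m n x :
  Cmod (sum_n_m (fun k => Sterm k x) m n)
  <= sum_n_m (fun k => Cmod (csym k)) m n
     + 2 * Cmod (sum_n_m (fun k => Cmult (c (Z.of_nat k)) (sin (INR k * x))) m n).
Proof.
  rewrite sum_Sterm. eapply Rle_trans; [apply Cmod_triangle|]. rewrite Cmod_2Ci.
  pose proof (Cmod_sum_csym_exp_le m n x). lra.
Qed.

Lemma Cmod_sine_sum_le_Sterm m n x :
  2 * Cmod (sum_n_m (fun k => Cmult (c (Z.of_nat k)) (sin (INR k * x))) m n)
  <= Cmod (sum_n_m (fun k => Sterm k x) m n) + sum_n_m (fun k => Cmod (csym k)) m n.
Proof.
  rewrite <- Cmod_2Ci, sum_Sterm.
  set (u := sum_n_m (fun k => Cmult (csym k) (cexp_i (- INR k * x))) m n).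
  set (w := Cmult (Cmult 2 Ci) _).
  replace w with (Cplus (Cplus u w) (Copp u)) at 1 by ring.
  eapply Rle_trans; [apply Cmod_triangle|]. rewrite Cmod_opp.
  pose proof (Cmod_sum_csym_exp_le m n x). unfold u. lra.
Qed.

Lemma Spart_unif_cauchy K : 0 <= K ->
  (forall j, (1 <= j)%nat ->
     sum_n_m (fun k => Cmod (Delta (fun n => c (Z.of_nat n)) k)) j (2 * j)
     <= K * (Cmod (c (Z.of_nat j)) + Cmod (c (Z.of_nat (2 * j))))) ->
  is_lim_seq (fun n => INR n * Cmod (c (Z.of_nat n))) 0 ->
  ex_series (fun n => Cmod (csym (S n))) ->
  unif_cauchy (Spart c).
Proof.
  intros HK Hblock Hdecay Hser. apply unif_cauchy_ordered. intros eps Heps.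
  set (eta := eps / (4 * (3 + 3 * K))).
  assert (Heta : 0 < eta) by (apply Rdiv_lt_0_compat; lra).
  destruct (ex_series_tail_le (fun k => Cmod (csym k)) Hser (eps / 2)) as [N2 HN2]; [lra|].
  apply is_lim_seq_spec in Hdecay. destruct (Hdecay (mkposreal eta Heta)) as [N1 HN1].
  exists (Nat.max N1 N2). intros p n x Hpn.
  destruct (Nat.eq_dec p n) as [->|Hne].
  { replace (Cminus (Spart c n x) (Spart c n x)) with (RtoC 0) by ring. rewrite Cmod_0. lra. }
  assert (Hdec : forall k, (S p <= k)%nat -> INR k * Cmod (c (Z.of_nat k)) <= eta).
  { intros k Hk. specialize (HN1 k ltac:(lia)). simpl in HN1.
    rewrite Rminus_0_r in HN1. pose proof (Rle_abs (INR k * Cmod (c (Z.of_nat k)))). lra. }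
  pose proof (sine_sum_le (fun k => c (Z.of_nat k)) K eta (S p) ltac:(lia) HK
                ltac:(lra) Hdec Hblock x n) as Hsine.
  pose proof (HN2 p n ltac:(lia) ltac:(lia)) as Htail.
  rewrite Spart_sub by lia. eapply Rle_trans; [apply Cmod_sum_Sterm_le|].
  assert (2 * ((3 + 3 * K) * eta) = eps / 2) by (unfold eta; field; lra).
  lra.
Qed.

(* At [x = 0] the partial sums reduce to [c_0 + sum_k (c_k + c_(-k))], and the sector
   condition makes [Re] comparable to [Cmod]. *)
Lemma csym_summable th : 0 <= th < PI / 2 ->
  (forall n, (1 <= n)%nat -> inM th (csym n)) ->
  unif_cauchy (Spart c) ->
  ex_series (fun n => Cmod (csym (S n))).
Proof.
  intros Hth Hsym HF.
  assert (Hcos : 0 < cos th) by (apply cos_gt_0; lra).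
  apply (ex_series_Cauchy (K := R_AbsRing) (V := R_CompleteNormedModule)).
  intros [eps Heps].
  destruct (HF (eps * cos th / 2)) as [N HN]; [apply Rdiv_lt_0_compat; nra|].
  exists N. intros n m Hn Hm.
  change (Rabs (sum_n_m (fun j => Cmod (csym (S j))) n m) < eps).
  destruct (le_lt_dec n m) as [Hnm|Hmn].
  2:{ rewrite sum_n_m_zero by lia. change (Rabs 0 < eps). rewrite Rabs_R0. lra. }
  rewrite (sum_n_m_S (G := R_AbelianMonoid) (fun k => Cmod (csym k))).
  rewrite Rabs_right by (apply Rle_ge, sum_n_m_nonneg; intros; apply Cmod_ge_0).
  pose proof (HN n (S m) 0 Hn ltac:(lia)) as Hcauchy.
  rewrite Spart_sub, (sum_n_m_ext _ _ _ _ Sterm_0) in Hcauchy by lia.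
  assert (cos th * sum_n_m (fun k => Cmod (csym k)) (S n) (S m)
          <= Re (sum_n_m csym (S n) (S m))).
  { rewrite Re_sum_n_m, <- sum_n_m_Rmult_l. apply sum_n_m_le_loc. intros k Hk.
    apply inM_Re_ge; [exact Hth|]. apply Hsym. lia. }
  pose proof (re_le_Cmod (sum_n_m csym (S n) (S m))).
  pose proof (Rle_abs (Re (sum_n_m csym (S n) (S m)))).
  apply Rmult_lt_reg_l with (cos th); [exact Hcos|]. nra.
Qed.

(* At [x = pi/(4m)] every [sin(kx)] with [m <= k <= 2m] is at least [1/sqrt 2]. *)
Lemma block_sums_vanish th : 0 <= th < PI / 2 ->
  (forall n, (1 <= n)%nat -> inM th (c (Z.of_nat n))) ->
  ex_series (fun n => Cmod (csym (S n))) ->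
  unif_cauchy (Spart c) ->
  forall eta, 0 < eta -> exists M, forall m, (M <= m)%nat -> (1 <= m)%nat ->
    sum_n_m (fun k => Cmod (c (Z.of_nat k))) m (2 * m) <= eta.
Proof.
  intros Hth Hcone Hser HF eta Heta.
  assert (Hcos : 0 < cos th) by (apply cos_gt_0; lra).
  assert (Hs2 : 0 < sqrt 2) by (apply sqrt_lt_R0; lra).
  set (g := cos th / sqrt 2).
  assert (Hg : 0 < g) by (apply Rdiv_lt_0_compat; lra).
  destruct (HF (g * eta)) as [N HN]; [nra|].
  destruct (ex_series_tail_le (fun k => Cmod (csym k)) Hser (g * eta)) as [N2 HN2]; [nra|].
  exists (S (Nat.max N N2)). intros m Hm Hm1.
  set (x := PI / (4 * INR m)).
  pose proof (HN (m - 1)%nat (2 * m)%nat x ltac:(lia) ltac:(lia)) as Hcauchy.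
  pose proof (HN2 (m - 1)%nat (2 * m)%nat ltac:(lia) ltac:(lia)) as Htail.
  rewrite Spart_sub in Hcauchy by lia.
  replace (S (m - 1)) with m in Hcauchy, Htail by lia.
  pose proof (Cmod_sine_sum_le_Sterm m (2 * m) x) as Hsine.
  set (w := sum_n_m (fun k => Cmult (c (Z.of_nat k)) (sin (INR k * x))) m (2 * m)) in Hsine.
  assert (Hre : g * sum_n_m (fun k => Cmod (c (Z.of_nat k))) m (2 * m) <= Re w).
  { unfold w. rewrite Re_sum_n_m, <- sum_n_m_Rmult_l. apply sum_n_m_le_loc. intros k Hk.
    rewrite re_scal_r.
    pose proof (inM_Re_ge th _ Hth (Hcone k ltac:(lia))).
    pose proof (sin_ge_inv_sqrt2 m k Hm1 Hk). fold x in H0.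
    pose proof (Cmod_ge_0 (c (Z.of_nat k))).
    assert (0 < / sqrt 2) by (apply Rinv_0_lt_compat; lra).
    replace (g * Cmod (c (Z.of_nat k))) with (cos th * Cmod (c (Z.of_nat k)) * / sqrt 2)
      by (unfold g; field; lra).
    apply Rmult_le_compat; nra. }
  pose proof (re_le_Cmod w). pose proof (Rle_abs (Re w)).
  apply Rmult_le_reg_l with g; [exact Hg|]. lra.
Qed.

End PartialSums.

Lemma Cmod_INR_mult (n : nat) (z : C) : Cmod (Cmult (RtoC (INR n)) z) = INR n * Cmod z.
Proof. rewrite Cmod_mult, Cmod_R, Rabs_right; [reflexivity | apply Rle_ge, pos_INR]. Qed.

Theorem theorem2 (c : Z -> C)
  (hM : exists theta0 : R, 0 <= theta0 < PI / 2 /\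
          forall n : nat, (1 <= n)%nat ->
            inM theta0 (Cplus (c (Z.of_nat n)) (c (- Z.of_nat n)%Z)))
  (hN : NBVS (fun n : nat => c (Z.of_nat n))) :
  (exists f : R -> C,
      (forall x : R, continuous f x)
      /\ (forall x : R, f (x + 2 * PI) = f x)
      /\ (forall x : R, filterlim (fun n : nat => Spart c n x) eventually (locally (f x)))
      /\ (forall eps : R, 0 < eps -> exists N : nat, forall n : nat, (N <= n)%nat ->
            forall x : R, Cmod (Cminus (f x) (Spart c n x)) <= eps))
  <->
  (is_lim_seq (fun n : nat => Cmod (Cmult (RtoC (INR n)) (c (Z.of_nat n)))) 0
   /\ ex_series (fun n : nat =>
        Cmod (Cplus (c (Z.of_nat (S n))) (c (- Z.of_nat (S n))%Z)))).
Proof.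
  destruct hN as [[th' [Hth' Hcone]] [K [HK Hblock]]].
  split.
  - intros [f [_ [_ [_ Hunif]]]].
    pose proof (unif_limit_unif_cauchy f (Spart c) Hunif) as HF.
    destruct hM as [th [Hth Hsym]].
    pose proof (csym_summable c th Hth Hsym HF) as Hser.
    split; [|exact Hser].
    apply (is_lim_seq_ext (fun n => INR n * Cmod (c (Z.of_nat n))));
      [intros n; symmetry; apply Cmod_INR_mult|].
    apply (block_decay _ K); [lra|exact Hblock|].
    exact (block_sums_vanish c th' Hth' Hcone Hser HF).
  - intros [Hlim Hser].
    apply unif_cauchy_limit; [|apply Spart_period|apply Spart_lipschitz].
    apply (Spart_unif_cauchy c K); [lra|exact Hblock| |exact Hser].
    exact (is_lim_seq_ext _ _ _ (fun n => Cmod_INR_mult n _) Hlim).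
Qed.
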